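(* Consider the planar system $$\frac{dN}{dt}=rN\left(1-\frac{N}{K}-\frac{h}{w+N}\right)-\frac{aNP}{b+N^2},\qquad \frac{dP}{dt}=\frac{cNP}{b+N^2}-\delta P,$$ where $r,K,h,w,a,b,c,\delta$ are positive constants. Suppose $K>w$ and the Allee effect is strong, i.e. $h>w$. Let $$N_{1}=\frac{(K-w)+\sqrt{(K-w)^2-4K(h-w)}}{2},\quad N_{2}=\frac{(K-w)-\sqrt{(K-w)^2-4K(h-w)}}{2},\quad N_3=\frac{K-w}{2},$$ and $E_n=(N_n,0)$ for $n=1,2,3$ (whenever these are equilibria). (i) If $h=\frac{(K+w)^2}{4K}$ and $c<\frac{\delta(b+N_3^2)}{N_3}$, then the axial equilibrium point $E_3$ is non-hyperbolic. (ii) If $h<\frac{(K+w)^2}{4K}$, and $c<\frac{\delta(b+N_n^2)}{N_n}$ for $n=1,2$, then the axial equilibrium point $E_1$ is locally asymptotically stable and the axial equilibrium point $E_2$ is unstable (a saddle).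
   Context: $N(t)$ is the prey density and $P(t)$ the predator density. An equilibrium is non-hyperbolic if the Jacobian matrix of the system at it has an eigenvalue with zero real part. *)

From Stdlib Require Import Reals.
From Coquelicot Require Import Coquelicot.
Open Scope R_scope.

Definition fN (r K h w a b : R) (N P : R) : R :=
  r * N * (1 - N / K - h / (w + N)) - a * N * P / (b + N ^ 2).
Definition fP (b c delta : R) (N P : R) : R :=
  c * N * P / (b + N ^ 2) - delta * P.

Definition is_equilibrium (f g : R -> R -> R) (x y : R) : Prop :=
  f x y = 0 /\ g x y = 0.

Definition jacobian (f g : R -> R -> R) (x y : R) : R * R * R * R :=
  (Derive (fun u => f u y) x, Derive (fun v => f x v) y,
   Derive (fun u => g u y) x, Derive (fun v => g x v) y).

Definition is_jac_eigenvalue (f g : R -> R -> R) (x y : R) (lam : C) : Prop :=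
  let '(j11, j12, j21, j22) := jacobian f g x y in
  ((RtoC j11 - lam) * (RtoC j22 - lam) - RtoC j12 * RtoC j21 = 0)%C.

Definition non_hyperbolic (f g : R -> R -> R) (x y : R) : Prop :=
  exists lam, is_jac_eigenvalue f g x y lam /\ Re lam = 0.

Definition loc_asympt_stable (f g : R -> R -> R) (x y : R) : Prop :=
  forall lam, is_jac_eigenvalue f g x y lam -> Re lam < 0.

Definition unstable (f g : R -> R -> R) (x y : R) : Prop :=
  exists lam, is_jac_eigenvalue f g x y lam /\ 0 < Re lam.

Definition saddle (f g : R -> R -> R) (x y : R) : Prop :=
  (forall lam, is_jac_eigenvalue f g x y lam -> Im lam = 0) /\
  (exists lam, is_jac_eigenvalue f g x y lam /\ 0 < Re lam) /\
  (exists lam, is_jac_eigenvalue f g x y lam /\ Re lam < 0).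

Definition N1 (K w h : R) : R := ((K - w) + sqrt ((K - w) ^ 2 - 4 * K * (h - w))) / 2.
Definition N2 (K w h : R) : R := ((K - w) - sqrt ((K - w) ^ 2 - 4 * K * (h - w))) / 2.
Definition N3 (K w : R) : R := (K - w) / 2.

(** At an axial point (N, 0) the Jacobian is upper triangular, because the
    predator equation is proportional to P.  Its eigenvalues are therefore the
    diagonal entries: the predator growth rate cN/(b+N^2) - delta, negative
    under the hypotheses on c, and the prey entry r N (K - w - 2N) / (K (w+N)).
    Axial equilibria are the roots N = ((K - w) + s)/2, s^2 = (K-w)^2 - 4K(h-w),
    of the prey nullcline h K = (K - N)(w + N), and there K - w - 2N = -s: the
    prey entry vanishes at the double root N3, is negative at N1 (s > 0) and
    positive at N2 (s < 0). *)

From Stdlib Require Import Reals Lra Psatz.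
From Coquelicot Require Import Coquelicot.
Open Scope R_scope.

Lemma Cmult_integral (z1 z2 : C) : (z1 * z2 = 0)%C -> z1 = 0 \/ z2 = 0.
Proof.
  intros H.
  assert (Hmod : Cmod z1 * Cmod z2 = 0) by now rewrite <- Cmod_mult, H, Cmod_0.
  destruct (Rmult_integral _ _ Hmod); [left | right]; now apply Cmod_eq_0.
Qed.

Lemma triangular_char_root_iff (a b x : R) (lam : C) :
  ((RtoC a - lam) * (RtoC b - lam) - RtoC x * RtoC 0 = 0)%C <->
  lam = RtoC a \/ lam = RtoC b.
Proof.
  replace ((RtoC a - lam) * (RtoC b - lam) - RtoC x * RtoC 0)%C
    with ((RtoC a - lam) * (RtoC b - lam))%C
    by ring.
  split.
  - intros H; destruct (Cmult_integral _ _ H) as [Ha | Hb];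
      [left | right]; symmetry; now apply Ceq_minus.
  - intros [-> | ->]; ring.
Qed.

Section TwoRealEigenvalues.

Variables (f g : R -> R -> R) (x y l1 l2 : R).
Hypothesis spectrum :
  forall lam, is_jac_eigenvalue f g x y lam <-> lam = RtoC l1 \/ lam = RtoC l2.

Lemma non_hyperbolic_of_zero_eigenvalue : l1 = 0 -> non_hyperbolic f g x y.
Proof.
  intros Hl1; exists (RtoC l1); split.
  - apply spectrum; now left.
  - now rewrite re_RtoC.
Qed.

Lemma loc_asympt_stable_of_neg_eigenvalues :
  l1 < 0 -> l2 < 0 -> loc_asympt_stable f g x y.
Proof.
  intros Hl1 Hl2 lam Hlam.
  destruct (proj1 (spectrum lam) Hlam) as [-> | ->]; now rewrite re_RtoC.
Qed.

Lemma saddle_of_eigenvalue_signs : 0 < l1 -> l2 < 0 -> saddle f g x y.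
Proof.
  intros Hl1 Hl2; split; [| split].
  - intros lam Hlam.
    destruct (proj1 (spectrum lam) Hlam) as [-> | ->]; apply im_RtoC.
  - exists (RtoC l1); split; [apply spectrum; now left | now rewrite re_RtoC].
  - exists (RtoC l2); split; [apply spectrum; now right | now rewrite re_RtoC].
Qed.

End TwoRealEigenvalues.

Lemma unstable_of_saddle (f g : R -> R -> R) (x y : R) :
  saddle f g x y -> unstable f g x y.
Proof. intros [_ [Hpos _]]; exact Hpos. Qed.

Section AxialEquilibrium.

Variables (r K h w a b c delta N : R).
Hypotheses (hK : K <> 0) (hwN : w + N <> 0) (hb : 0 < b).
Hypothesis nullcline : h * K = (K - N) * (w + N).

Let hbN : b + N ^ 2 <> 0.
Proof. nra. Qed.

Let h_eq : h = (K - N) * (w + N) / K.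
Proof. rewrite <- nullcline; field; auto. Qed.

Lemma allee_factor_eq0 : 1 - N / K - h / (w + N) = 0.
Proof. rewrite h_eq; field; auto. Qed.

Lemma axial_equilibrium :
  is_equilibrium (fN r K h w a b) (fP b c delta) N 0.
Proof.
  unfold is_equilibrium, fN, fP; rewrite allee_factor_eq0; split; field; auto.
Qed.

Lemma jacobian_axial :
  jacobian (fN r K h w a b) (fP b c delta) N 0 =
  (r * N / (K * (w + N)) * (K - w - 2 * N), - (a * N / (b + N ^ 2)),
   0, c * N / (b + N ^ 2) - delta).
Proof.
  unfold jacobian, fN, fP; rewrite h_eq.
  repeat f_equal; apply is_derive_unique; auto_derive;
    repeat split; auto; field; repeat split; auto; nra.
Qed.

Lemma axial_eigenvalue_iff (lam : C) :
  is_jac_eigenvalue (fN r K h w a b) (fP b c delta) N 0 lam <->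
  lam = RtoC (r * N / (K * (w + N)) * (K - w - 2 * N)) \/
  lam = RtoC (c * N / (b + N ^ 2) - delta).
Proof.
  unfold is_jac_eigenvalue; rewrite jacobian_axial.
  apply triangular_char_root_iff.
Qed.

End AxialEquilibrium.

Lemma allee_nullcline_root (K w h s N : R) :
  s * s = (K - w) ^ 2 - 4 * K * (h - w) -> 2 * N = K - w + s ->
  h * K = (K - N) * (w + N).
Proof. intros Hs HN; nra. Qed.

Lemma allee_discriminant_eq0 (K w h : R) :
  K <> 0 -> h = (K + w) ^ 2 / (4 * K) -> (K - w) ^ 2 - 4 * K * (h - w) = 0.
Proof. intros HK ->; field; auto. Qed.

Lemma allee_discriminant_pos (K w h : R) :
  0 < K -> h < (K + w) ^ 2 / (4 * K) -> 0 < (K - w) ^ 2 - 4 * K * (h - w).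
Proof.
  intros HK Hh.
  apply Rlt_div_r in Hh; [nra | lra].
Qed.

Lemma sqrt_allee_discriminant_lt (K w h : R) :
  0 < K -> w < K -> w < h -> sqrt ((K - w) ^ 2 - 4 * K * (h - w)) < K - w.
Proof.
  intros HK HwK Hwh.
  destruct (Rlt_or_le ((K - w) ^ 2 - 4 * K * (h - w)) 0) as [Hneg | Hnn].
  - rewrite sqrt_neg_0 by lra; lra.
  - rewrite <- (sqrt_pow2 (K - w)) at 2 by lra.
    apply sqrt_lt_1_alt; split; nra.
Qed.

Lemma predator_growth_rate_neg (b c delta N : R) :
  0 < b -> 0 < N -> c < delta * (b + N ^ 2) / N -> c * N / (b + N ^ 2) - delta < 0.
Proof.
  intros Hb HN Hc.
  apply Rlt_div_r in Hc; [| lra].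
  replace (c * N / (b + N ^ 2) - delta) with ((c * N - delta * (b + N ^ 2)) / (b + N ^ 2))
    by (field; nra).
  apply Rdiv_neg_pos; nra.
Qed.

Section AlleeRoot.

Variables (r K h w a b c delta s N : R).
Hypotheses (hr : 0 < r) (hK : 0 < K) (hw : 0 < w) (hb : 0 < b) (hN : 0 < N).
Hypotheses (hs : s * s = (K - w) ^ 2 - 4 * K * (h - w)) (hNs : 2 * N = K - w + s).

Let root : h * K = (K - N) * (w + N).
Proof. exact (allee_nullcline_root K w h s N hs hNs). Qed.

Let spectrum (lam : C) :
  is_jac_eigenvalue (fN r K h w a b) (fP b c delta) N 0 lam <->
  lam = RtoC (- (r * N / (K * (w + N))) * s) \/
  lam = RtoC (c * N / (b + N ^ 2) - delta).
Proof.
  replace (- (r * N / (K * (w + N))) * s) with (r * N / (K * (w + N)) * (K - w - 2 * N))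
    by (replace s with (- (K - w - 2 * N)) by lra; ring).
  apply axial_eigenvalue_iff; auto; lra.
Qed.

Let scale_pos : 0 < r * N / (K * (w + N)).
Proof. apply Rdiv_lt_0_compat; apply Rmult_lt_0_compat; lra. Qed.

Lemma allee_root_equilibrium : is_equilibrium (fN r K h w a b) (fP b c delta) N 0.
Proof. apply axial_equilibrium; auto; lra. Qed.

Lemma allee_root_non_hyperbolic :
  s = 0 -> non_hyperbolic (fN r K h w a b) (fP b c delta) N 0.
Proof.
  intros Hs0; eapply non_hyperbolic_of_zero_eigenvalue; [exact spectrum |].
  rewrite Hs0; ring.
Qed.

Lemma allee_root_loc_asympt_stable :
  0 < s -> c < delta * (b + N ^ 2) / N ->
  loc_asympt_stable (fN r K h w a b) (fP b c delta) N 0.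
Proof.
  intros Hs_pos Hc; eapply loc_asympt_stable_of_neg_eigenvalues; [exact spectrum | |].
  - nra.
  - now apply predator_growth_rate_neg.
Qed.

Lemma allee_root_saddle :
  s < 0 -> c < delta * (b + N ^ 2) / N ->
  saddle (fN r K h w a b) (fP b c delta) N 0.
Proof.
  intros Hs_neg Hc; eapply saddle_of_eigenvalue_signs; [exact spectrum | |].
  - nra.
  - now apply predator_growth_rate_neg.
Qed.

End AlleeRoot.

Theorem theorem6 (r K h w a b c delta : R)
  (hr : 0 < r) (hK : 0 < K) (hh : 0 < h) (hw : 0 < w)
  (ha : 0 < a) (hb : 0 < b) (hc : 0 < c) (hdelta : 0 < delta)
  (hKw : K > w) (hAllee : h > w) :
  (h = (K + w) ^ 2 / (4 * K) ->
   c < delta * (b + N3 K w ^ 2) / N3 K w ->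
   is_equilibrium (fN r K h w a b) (fP b c delta) (N3 K w) 0 /\
   non_hyperbolic (fN r K h w a b) (fP b c delta) (N3 K w) 0) /\
  (h < (K + w) ^ 2 / (4 * K) ->
   c < delta * (b + N1 K w h ^ 2) / N1 K w h ->
   c < delta * (b + N2 K w h ^ 2) / N2 K w h ->
   is_equilibrium (fN r K h w a b) (fP b c delta) (N1 K w h) 0 /\
   loc_asympt_stable (fN r K h w a b) (fP b c delta) (N1 K w h) 0 /\
   is_equilibrium (fN r K h w a b) (fP b c delta) (N2 K w h) 0 /\
   unstable (fN r K h w a b) (fP b c delta) (N2 K w h) 0 /\
   saddle (fN r K h w a b) (fP b c delta) (N2 K w h) 0).
Proof.
  split.
  - (* The prey eigenvalue vanishes at N3 whatever c is. *)
    intros Hh _.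
    assert (Hs : 0 * 0 = (K - w) ^ 2 - 4 * K * (h - w))
      by (rewrite Rmult_0_l, allee_discriminant_eq0; [reflexivity | lra | exact Hh]).
    split.
    + apply allee_root_equilibrium with (s := 0); auto; unfold N3; lra.
    + apply allee_root_non_hyperbolic with (s := 0); auto; unfold N3; lra.
  - intros Hh Hc1 Hc2.
    set (s := sqrt ((K - w) ^ 2 - 4 * K * (h - w))).
    assert (Hs : s * s = (K - w) ^ 2 - 4 * K * (h - w))
      by (apply sqrt_sqrt, Rlt_le, allee_discriminant_pos; assumption).
    assert (Hs_pos : 0 < s) by (apply sqrt_lt_R0, allee_discriminant_pos; assumption).
    assert (Hs_lt : s < K - w) by (apply sqrt_allee_discriminant_lt; lra).
    assert (HN1 : 2 * N1 K w h = K - w + s) by (unfold N1; fold s; lra).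
    assert (HN2 : 2 * N2 K w h = K - w + - s) by (unfold N2; fold s; lra).
    assert (Hsaddle : saddle (fN r K h w a b) (fP b c delta) (N2 K w h) 0)
      by (apply allee_root_saddle with (s := - s); auto; lra).
    split; [| split; [| split; [| split]]].
    + apply allee_root_equilibrium with (s := s); auto; lra.
    + apply allee_root_loc_asympt_stable with (s := s); auto; lra.
    + apply allee_root_equilibrium with (s := - s); auto; lra.
    + now apply unstable_of_saddle.
    + exact Hsaddle.
Qed.
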